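(* Let $n,d\ge 1$ and let $$T=\begin{pmatrix} B_{11} & \cdots & B_{1n}\\ \vdots & \ddots & \vdots\\ B_{n1} & \cdots & B_{nn}\end{pmatrix}=\sum_{i,j=1}^n E_{ij}\otimes B_{ij}\in M(nd,\mathbb{C}),$$ where $E_{ij}$ are the standard matrix units of $M(n,\mathbb{C})$, and suppose that all blocks $B_{ij}\in M(d,\mathbb{C})$ ($i,j=1,\ldots,n$) are normal and pairwise commute. Let $\{u_k\}_{k=1}^d$ be a common orthonormal basis of eigenvectors of all the $B_{ij}$, with $B_{ij}u_k=\beta_k^{ij}u_k$ for $i,j=1,\ldots,n$, $k=1,\ldots,d$, and for each $k$ let $M(\beta_k^{ij})=(\beta_k^{ij})_{i,j=1}^n\in M(n,\mathbb{C})$, so that $T=\sum_{k=1}^d M(\beta_k^{ij})\otimes u_ku_k^{\dagger}$. Then: (1) $T$ is separable if and only if $T$ is positive semidefinite; (2) $T$ is positive semidefinite if and only if all $d$ matrices $M(\beta_k^{ij})$, $k=1,\ldots,d$, are positive semidefinite; (3) if $T$ is separable, then $$T=\sum_{k=1}^d\sum_{j=0}^{n-1}\lambda_j^k\, v_j^k v_j^{k\dagger}\otimes u_ku_k^{\dagger},$$ where $\{\lambda_j^k\}_{j=0}^{n-1}$ and $\{v_j^k\}_{j=0}^{n-1}$ are the eigenvalues and a corresponding orthonormal basis of eigenvectors of the (positive semidefinite, hence Hermitian) matrix $M(\beta_k^{ij})$; this is a separable decomposition.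
   Context: The tensor product of matrices is the Kronecker product, so $A\otimes B$ for $A\in M(n,\mathbb{C})$, $B\in M(d,\mathbb{C})$ is the $nd\times nd$ block matrix whose $(i,j)$ block is $a_{ij}B$. A matrix $T\in M(nd,\mathbb{C})\cong M(n,\mathbb{C})\otimes M(d,\mathbb{C})$ is called separable if it is positive semidefinite and can be written as a finite sum $T=\sum_i \rho_i\otimes\sigma_i$ with $\rho_i\in M(n,\mathbb{C})$ and $\sigma_i\in M(d,\mathbb{C})$ positive semidefinite (states need not be normalized). *)

(* Complex scalars: an arbitrary numClosedFieldType C
   (e.g. algC, or complex R for R : realType). *)
From HB Require Import structures.
From mathcomp Require Import all_boot all_order all_algebra.
From mathcomp Require Export sesquilinear spectral.
From mathcomp.real_closed Require Export mxtens.
Set Implicit Arguments. Unset Strict Implicit. Unset Printing Implicit Defensive.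
Import Order.TTheory GRing.Theory Num.Theory.
Local Open Scope ring_scope.

Definition ctr {C : numClosedFieldType} {m n : nat} (M : 'M[C]_(m, n)) : 'M[C]_(n, m) :=
  map_mx Num.conj (M^T).

Definition psd {C : numClosedFieldType} {n : nat} (A : 'M[C]_n) : Prop :=
  ctr A = A /\ forall v : 'cV[C]_n, 0 <= (ctr v *m A *m v) 0 0.

Definition separable {C : numClosedFieldType} {n d : nat} (T : 'M[C]_(n * d)) : Prop :=
  psd T /\
  exists (m : nat) (rho : 'I_m -> 'M[C]_n) (sigma : 'I_m -> 'M[C]_d),
    (forall i, psd (rho i) /\ psd (sigma i)) /\
    T = \sum_(i < m) (rho i *t sigma i).

Definition orthonormal_fam {C : numClosedFieldType} {n m : nat} (u : 'I_m -> 'cV[C]_n) : Prop :=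
  forall k l, ctr (u k) *m u l = ((k == l)%:R)%:M.

(* Expanding every block in the common eigenbasis gives
   T = sum_k M_k (x) u_k u_k^dagger.  Compressing T by 1 (x) u_k kills all
   terms but the k-th and returns M_k, so T is positive semidefinite exactly
   when every M_k is; in that case the expansion itself is a separable
   decomposition, and expanding each M_k in its own eigenbasis refines it
   into the rank-one terms of (3). *)
From HB Require Import structures.
From mathcomp Require Import all_boot all_order all_algebra.
From mathcomp Require Import sesquilinear spectral.
From mathcomp.real_closed Require Import mxtens.
Import Order.TTheory GRing.Theory Num.Theory.
Set Implicit Arguments. Unset Strict Implicit. Unset Printing Implicit Defensive.
Local Open Scope ring_scope.

Section ConjugateTranspose.
Context {C : numClosedFieldType}.

Lemma ctrK m n (A : 'M[C]_(m, n)) : ctr (ctr A) = A.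
Proof. exact: trmxCK. Qed.

Lemma ctrM m n p (A : 'M[C]_(m, n)) (B : 'M[C]_(n, p)) :
  ctr (A *m B) = ctr B *m ctr A.
Proof. by rewrite /ctr trmx_mul map_mxM. Qed.

Lemma ctrZ m n (a : C) (A : 'M[C]_(m, n)) : ctr (a *: A) = a^* *: ctr A.
Proof. by apply/matrixP=> i j; rewrite !mxE rmorphM. Qed.

Lemma ctr_sum m n I r (P : pred I) (F : I -> 'M[C]_(m, n)) :
  ctr (\sum_(i <- r | P i) F i) = \sum_(i <- r | P i) ctr (F i).
Proof.
apply/matrixP=> i j; rewrite !mxE !summxE rmorph_sum.
by apply: eq_bigr => k _; rewrite !mxE.
Qed.

Lemma ctr_scalar n (a : C) : ctr (a%:M : 'M[C]_n) = a^*%:M.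
Proof. by apply/matrixP=> i j; rewrite !mxE eq_sym rmorphMn. Qed.

Lemma ctr_tens m n p q (A : 'M[C]_(m, n)) (B : 'M[C]_(p, q)) :
  ctr (A *t B) = ctr A *t ctr B.
Proof. by apply/matrixP=> i j; rewrite !mxE rmorphM. Qed.

End ConjugateTranspose.

Section KroneckerLinearity.
Context {R : comPzRingType}.

Lemma tensmxZl m n p q (a : R) (A : 'M[R]_(m, n)) (B : 'M[R]_(p, q)) :
  (a *: A) *t B = a *: (A *t B).
Proof. by apply/matrixP=> i j; rewrite !mxE mulrA. Qed.

Lemma tensmxZr m n p q (a : R) (A : 'M[R]_(m, n)) (B : 'M[R]_(p, q)) :
  A *t (a *: B) = a *: (A *t B).
Proof. by apply/matrixP=> i j; rewrite !mxE mulrCA. Qed.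

Lemma tensmx_suml m n p q I r (P : pred I) (F : I -> 'M[R]_(m, n))
    (B : 'M[R]_(p, q)) :
  (\sum_(i <- r | P i) F i) *t B = \sum_(i <- r | P i) (F i *t B).
Proof.
apply/matrixP=> a b; rewrite !mxE !summxE mulr_suml.
by apply: eq_bigr => i _; rewrite mxE.
Qed.

Lemma tensmx_sumr m n p q I r (P : pred I) (A : 'M[R]_(m, n))
    (F : I -> 'M[R]_(p, q)) :
  A *t (\sum_(i <- r | P i) F i) = \sum_(i <- r | P i) (A *t F i).
Proof.
apply/matrixP=> a b; rewrite !mxE !summxE mulr_sumr.
by apply: eq_bigr => i _; rewrite mxE.
Qed.

Lemma block_tens_expand n m d (beta : 'I_n -> 'I_n -> 'I_m -> R)
    (P : 'I_m -> 'M[R]_d) :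
  \sum_(i < n) \sum_(j < n) (delta_mx i j *t \sum_k beta i j k *: P k)
  = \sum_k (\matrix_(i, j) beta i j k) *t P k.
Proof.
symmetry; under eq_bigr => k _ do rewrite [X in X *t _]matrix_sum_delta tensmx_suml.
rewrite exchange_big; apply: eq_bigr => i _.
under eq_bigr => k _ do rewrite tensmx_suml.
rewrite exchange_big; apply: eq_bigr => j _.
rewrite tensmx_sumr; apply: eq_bigr => k _.
by rewrite tensmxZl tensmxZr mxE.
Qed.

End KroneckerLinearity.

Section Orthonormal.
Context {C : numClosedFieldType}.

Lemma sum_outer_orthonormal n (u : 'I_n -> 'cV[C]_n) :
  orthonormal_fam u -> \sum_k u k *m ctr (u k) = 1%:M.
Proof.
move=> u_on; pose U : 'M[C]_n := \matrix_(i, k) u k i 0.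
have UtU : ctr U *m U = 1%:M.
  apply/matrixP=> k l; move/matrixP/(_ 0 0): (u_on k l).
  by rewrite !mxE eqxx mulr1n => <-; apply: eq_bigr => i _; rewrite !mxE.
apply/matrixP=> i j; rewrite summxE -(mulmx1C UtU) mxE.
by apply: eq_bigr => k _; rewrite !mxE big_ord1 !mxE.
Qed.

Lemma eigen_sum_outer n (A : 'M[C]_n) (u : 'I_n -> 'cV[C]_n) (c : 'I_n -> C) :
  orthonormal_fam u -> (forall k, A *m u k = c k *: u k) ->
  A = \sum_k c k *: (u k *m ctr (u k)).
Proof.
move=> u_on Au; rewrite -[A]mulmx1 -(sum_outer_orthonormal u_on) mulmx_sumr.
by apply: eq_bigr => k _; rewrite mulmxA Au scalemxAl.
Qed.

End Orthonormal.

Section PositiveSemidefinite.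
Context {C : numClosedFieldType}.

Lemma psd_scale n (c : C) (A : 'M[C]_n) : 0 <= c -> psd A -> psd (c *: A).
Proof.
move=> c_ge0 [A_herm A_ge0]; split=> [|v]; first by rewrite ctrZ geC0_conj ?A_herm.
by rewrite -scalemxAr -scalemxAl mxE mulr_ge0.
Qed.

Lemma psd_sum n I (r : seq I) (F : I -> 'M[C]_n) :
  (forall i, psd (F i)) -> psd (\sum_(i <- r) F i).
Proof.
move=> F_psd; split=> [|v].
  by rewrite ctr_sum; apply: eq_bigr => i _; case: (F_psd i).
rewrite mulmx_sumr mulmx_suml summxE sumr_ge0 // => i _.
by case: (F_psd i) => _; apply.
Qed.

Lemma psd_congr m p (A : 'M[C]_m) (X : 'M[C]_(m, p)) :
  psd A -> psd (ctr X *m A *m X).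
Proof.
move=> [A_herm A_ge0]; split=> [|v]; first by rewrite !ctrM ctrK A_herm mulmxA.
by have := A_ge0 (X *m v); rewrite ctrM !mulmxA.
Qed.

Lemma ctr_mul_ge0 n (x : 'cV[C]_n) : 0 <= (ctr x *m x) 0 0.
Proof. by rewrite mxE sumr_ge0 // => i _; rewrite !mxE mulrC mul_conjC_ge0. Qed.

Lemma psd1 n : psd (1%:M : 'M[C]_n).
Proof. by split=> [|v]; rewrite ?ctr_scalar ?conjC1 // mulmx1 ctr_mul_ge0. Qed.

Lemma psd_outer n (w : 'cV[C]_n) : psd (w *m ctr w).
Proof. by have := psd_congr (ctr w) (psd1 1); rewrite ctrK mulmx1. Qed.

Lemma psd_castmx m m' (e : m = m') (A : 'M[C]_m) : psd A -> psd (castmx (e, e) A).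
Proof. by case: m' / e; rewrite castmx_id. Qed.

Lemma psd_tens1 n (A : 'M[C]_n) : psd (A *t (1%:M : 'M[C]_1)) <-> psd A.
Proof.
rewrite tens_mx_scalar scale1r; split=> [|]; last exact: psd_castmx.
by move/(psd_castmx (muln1 n)); rewrite castmx_comp castmx_id.
Qed.

Lemma psd_eigen_ge0 n (A : 'M[C]_n) (v : 'cV[C]_n) (l : C) :
  psd A -> ctr v *m v = 1%:M -> A *m v = l *: v -> 0 <= l.
Proof.
move=> [_ A_ge0] v_unit Av; have := A_ge0 v.
by rewrite -mulmxA Av -scalemxAr v_unit mxE mxE eqxx mulr1.
Qed.

Lemma psd_tens_outer n d (A : 'M[C]_n) (w : 'cV[C]_d) :
  psd A -> psd (A *t (w *m ctr w)).
Proof.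
move=> /psd_tens1/(psd_congr (1%:M *t ctr w)).
by rewrite ctr_tens ctrK ctr_scalar conjC1 !tensmx_mul mul1mx !mulmx1.
Qed.

Lemma psd_sum_tens_outer n d m (A : 'I_m -> 'M[C]_n) (u : 'I_m -> 'cV[C]_d) :
  orthonormal_fam u ->
  psd (\sum_k A k *t (u k *m ctr (u k))) <-> forall k, psd (A k).
Proof.
move=> u_on; split=> [S_psd k|A_psd]; last by apply: psd_sum => k; apply: psd_tens_outer.
apply/psd_tens1; move/(psd_congr (1%:M *t u k)): S_psd.
rewrite ctr_tens ctr_scalar conjC1 mulmx_sumr mulmx_suml (bigD1 k) //= big1.
  rewrite !tensmx_mul mul1mx [A k *m _]mulmx1 !mulmxA.
  by rewrite u_on eqxx mul1mx u_on eqxx addr0.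
move=> l lk; rewrite !tensmx_mul mul1mx !mulmxA u_on eq_sym (negPf lk).
by rewrite mul_scalar_mx scale0r mul0mx tensmx0.
Qed.

End PositiveSemidefinite.

Theorem theorem1 (C : numClosedFieldType) (n d : nat)
  (n_ge1 : (0 < n)%N) (d_ge1 : (0 < d)%N)
  (B : 'I_n -> 'I_n -> 'M[C]_d)
  (B_normal : forall i j, B i j \is normalmx)
  (B_comm : forall i j i' j', B i j *m B i' j' = B i' j' *m B i j)
  (u : 'I_d -> 'cV[C]_d) (u_on : orthonormal_fam u)
  (beta : 'I_n -> 'I_n -> 'I_d -> C)
  (u_eig : forall i j k, B i j *m u k = beta i j k *: u k) :
  let T : 'M[C]_(n * d) := \sum_(i < n) \sum_(j < n) (delta_mx i j *t B i j) in
  let M : 'I_d -> 'M[C]_n := fun k => \matrix_(i, j) beta i j k in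
  (separable T <-> psd T) /\
  (psd T <-> forall k, psd (M k)) /\
  (separable T ->
   forall (lambda : 'I_d -> 'I_n -> C) (v : 'I_d -> 'I_n -> 'cV[C]_n),
     (forall k, orthonormal_fam (v k)) ->
     (forall k j, M k *m v k j = lambda k j *: v k j) ->
     T = \sum_(k < d) \sum_(j < n)
           ((lambda k j *: (v k j *m ctr (v k j))) *t (u k *m ctr (u k)))
     /\ (forall k j, psd (lambda k j *: (v k j *m ctr (v k j)))
                     /\ psd (u k *m ctr (u k)))).
Proof.
(* Normality and commutation of the blocks only serve to produce the common
   eigenbasis [u], which is given here. *)
move=> T M.
pose P k := u k *m ctr (u k).
have T_expand : T = \sum_k M k *t P k.
  rewrite /T /M /P -block_tens_expand.
  by do 2!apply: eq_bigr => ? _; rewrite -(eigen_sum_outer u_on (u_eig _ _)).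
have psd_T : psd T <-> forall k, psd (M k).
  by rewrite T_expand; apply: psd_sum_tens_outer.
split.
  split=> [[] //|T_psd]; split=> //; exists d, M, P.
  by split=> // k; split; [exact: (proj1 psd_T T_psd) | exact: psd_outer].
split=> // -[T_psd _] lambda v v_on Mv.
have M_psd := proj1 psd_T T_psd.
have M_expand k : M k = \sum_j lambda k j *: (v k j *m ctr (v k j)).
  exact: eigen_sum_outer (v_on k) (Mv k).
split=> [|k j].
  by rewrite T_expand; apply: eq_bigr => k _; rewrite M_expand tensmx_suml.
split; last exact: psd_outer.
apply: psd_scale (psd_outer _); apply: psd_eigen_ge0 (M_psd k) _ (Mv k j).
by rewrite v_on eqxx.
Qed.
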